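(* Each of the graphs $K_4, H_1, H_2, H_3, H_4, H_5, H_6, H_7, H_8, H_9$ is $4$-$\chi_\rho$-vertex-critical.
   Context: All graphs are finite and simple; $d(u,v)$ is the shortest-path distance. A $k$-packing coloring of $G$ is a map $c:V(G)\to\{1,\dots,k\}$ such that whenever $u\neq v$ and $c(u)=c(v)=i$, we have $d(u,v)>i$. $\chi_\rho(G)$ is the least $k$ such that $G$ has a $k$-packing coloring. $G$ is $4$-$\chi_\rho$-vertex-critical if $\chi_\rho(G)=4$ and $\chi_\rho(G-x)<4$ for every vertex $x$. $H_1$: vertices $a,b,c,d,e$; edges $ab,ad,ae,bd,de,bc$. $H_2$: vertices $a,b,c,d,e$; edges $ab,be,ea,bc,cd,db$. $H_3$: vertices $a,\dots,f$; edges $ab,bc,ca,ad,be,cf$. $H_4$: vertices $a,\dots,g$; edges $ab,bc,cd,de,ef,cg,dg$. $H_5$: vertices $a,\dots,f$; edges $ab,bc,cd,da,be,cf$. $H_6$: vertices $a,\dots,f$; edges $ab,be,ed,da,ac,ce,bf$. $H_7$: vertices $a,\dots,j$; edges $ab,bc,cd,de,ef,eg,gh,hi,ij,jb$. $H_8$: $H_7$ together with the additional edge $ai$. $H_9$: vertices $a,\dots,h$; edges $ab,bc,cd,de,bf,cg,dh$. *)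

From mathcomp Require Import all_boot.
Set Implicit Arguments. Unset Strict Implicit. Unset Printing Implicit Defensive.

(* A finite simple graph is given by a vertex set V : {set T} over a finType T
   and a symmetric irreflexive adjacency relation e : rel T; only the edges
   between vertices of V count (so removing a vertex x is V :\ x). *)
Definition simple_rel (T : finType) (e : rel T) : Prop :=
  irreflexive e /\ symmetric e.

(* d_G(u,v) <= k : there is a walk in G (all vertices in V) of length <= k
   from u to v.  Hence d(u,v) > k iff ~ dist_le V e u v k (covers d = oo). *)
Definition dist_le (T : finType) (V : {set T}) (e : rel T) (u v : T) (k : nat)
  : Prop :=
  exists p : seq T,
    [/\ u \in V, all (fun w => w \in V) p, path e u p, last u p = v
      & size p <= k].

Definition packing_coloring (T : finType) (V : {set T}) (e : rel T) (k : nat)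
  (c : T -> nat) : Prop :=
  (forall u, u \in V -> 1 <= c u <= k) /\
  (forall u v, u \in V -> v \in V -> u != v -> c u = c v ->
     ~ dist_le V e u v (c u)).

Definition has_packing (T : finType) (V : {set T}) (e : rel T) (k : nat) : Prop :=
  exists c : T -> nat, packing_coloring V e k c.

Definition packing_chromatic_eq (T : finType) (V : {set T}) (e : rel T)
  (k : nat) : Prop :=
  has_packing V e k /\ (forall j, j < k -> ~ has_packing V e j).

Definition vertex_critical (T : finType) (V : {set T}) (e : rel T) (k : nat)
  : Prop :=
  packing_chromatic_eq V e k /\
  (forall x, x \in V -> exists2 j, j < k & packing_chromatic_eq (V :\ x) e j).

Definition graph_of (n : nat) (es : seq (nat * nat)) : rel 'I_n :=
  fun u v => ((nat_of_ord u, nat_of_ord v) \in es) ||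
             ((nat_of_ord v, nat_of_ord u) \in es).
Arguments graph_of : clear implicits.

(* Vertices a,b,c,... are 0,1,2,... *)
Definition K4 : rel 'I_4 := fun u v => u != v.
Definition H1 : rel 'I_5 := graph_of 5 [:: (0,1); (0,3); (0,4); (1,3); (3,4); (1,2)].
Definition H2 : rel 'I_5 := graph_of 5 [:: (0,1); (1,4); (4,0); (1,2); (2,3); (3,1)].
Definition H3 : rel 'I_6 := graph_of 6 [:: (0,1); (1,2); (2,0); (0,3); (1,4); (2,5)].
Definition H4 : rel 'I_7 :=
  graph_of 7 [:: (0,1); (1,2); (2,3); (3,4); (4,5); (2,6); (3,6)].
Definition H5 : rel 'I_6 := graph_of 6 [:: (0,1); (1,2); (2,3); (3,0); (1,4); (2,5)].
Definition H6 : rel 'I_6 :=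
  graph_of 6 [:: (0,1); (1,4); (4,3); (3,0); (0,2); (2,4); (1,5)].
Definition H7_edges : seq (nat * nat) :=
  [:: (0,1); (1,2); (2,3); (3,4); (4,5); (4,6); (6,7); (7,8); (8,9); (9,1)].
Definition H7 : rel 'I_10 := graph_of 10 H7_edges.
Definition H8 : rel 'I_10 := graph_of 10 ((0,8) :: H7_edges).
Definition H9 : rel 'I_8 :=
  graph_of 8 [:: (0,1); (1,2); (2,3); (3,4); (1,5); (2,6); (3,7)].

(* All ten claims are finite and are decided by computation. A backtracking search colouring the
   vertices one at a time, each with a colour compatible with the vertices
   already coloured, finds a k-packing colouring whenever one exists; so its
   failure for every j < k proves chi_rho >= k. The colouring it returns for
   k itself is re-checked against the definition, so the search never needs
   to be proved sound. *)

From mathcomp Require Import all_boot.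
Set Implicit Arguments. Unset Strict Implicit. Unset Printing Implicit Defensive.

Section FirstSome.
Variables (A B : Type) (f : A -> option B).

(* Unlike [ohead (pmap f s)], this stops at the first success under the
   call-by-value strategy of [vm_compute]. *)
Fixpoint first_some (s : seq A) : option B :=
  if s is a :: s' then (if f a is Some b then Some b else first_some s') else None.

Lemma first_some_has s : isSome (first_some s) = has (fun a => isSome (f a)) s.
Proof. by elim: s => //= a s <-; case: (f a). Qed.

End FirstSome.

Section PackingCheck.
Variables (T : finType) (e : rel T) (vs : seq T).

Fixpoint ball (u : T) (k : nat) : seq T :=
  if k is k'.+1 then
    let B := ball u k' in [seq w <- vs | (w \in B) || has (e^~ w) B]
  else [seq w <- vs | w == u].

Lemma ball_sub u k : {subset ball u k <= vs}.
Proof. by case: k => [|k] w /=; rewrite mem_filter => /andP[]. Qed.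

Lemma ball_mono u k m : k <= m -> {subset ball u k <= ball u m}.
Proof.
move/subnK <-; elim: (m - k) => [//|d IH] w /IH wB.
by rewrite addSn /= mem_filter wB (ball_sub wB).
Qed.

Variable V : {set T}.
Hypothesis memV : V =i vs.

Lemma ballP u v k : reflect (dist_le V e u v k) (v \in ball u k).
Proof.
apply: (iffP idP).
  elim: k v => [|k IH] v /=; rewrite mem_filter.
    by case/andP=> /eqP-> uV; exists [::]; rewrite memV.
  case/andP=> /orP[/IH [p [uV pV up pv sp]] | /hasP[y /IH yB eyv]] vV.
    by exists p; split=> //; apply: leqW.
  have [p [uV pV up py sp]] := yB.
  exists (rcons p v); split=> //.
  - by rewrite all_rcons memV vV.
  - by rewrite rcons_path up py.
  - by rewrite last_rcons.
  - by rewrite size_rcons.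
case=> p [uV pV up pv sp].
elim/last_ind: p v k pV up pv sp => [|p w IH] v k.
  by move=> _ _ /= <- _; apply: (@ball_mono u 0) => //=; rewrite mem_filter eqxx -memV.
rewrite all_rcons rcons_path last_rcons size_rcons => /andP[wV pV] /andP[up ew] <-.
case: k => [//|k] sp /=; rewrite mem_filter -memV wV andbT.
by apply/orP; right; apply/hasP; exists (last u p) => //; apply: IH.
Qed.

Definition packing_coloringb k (c : T -> nat) :=
  all (fun u => 0 < c u <= k) vs &&
  all (fun u => all (fun v =>
         (u != v) && (c u == c v) ==> (v \notin ball u (c u))) vs) vs.

Lemma packing_coloringbP k c :
  reflect (packing_coloring V e k c) (packing_coloringb k c).
Proof.
apply: (iffP andP) => [[/allP rng /allP sep] | [rng sep]]; split.
- by move=> u; rewrite memV => /rng.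
- move=> u v; rewrite !memV => uV vV uv cuv /ballP.
  by have /allP/(_ v vV) := sep u uV; rewrite uv cuv eqxx => /negP.
- by apply/allP=> u; rewrite -memV => /rng.
- apply/allP=> u uV; apply/allP=> v vV; apply/implyP=> /andP[uv /eqP cuv].
  by apply/ballP; apply: sep; rewrite ?memV.
Qed.

(* In a partial colouring, the vertices not coloured yet have colour 0. *)
Definition admissible (c : T -> nat) x col :=
  all (fun y => (y != x) && (c y == col) ==> (y \notin ball x col)) vs.

Fixpoint extend_coloring k (s : seq T) (c : T -> nat) : option (T -> nat) :=
  if s is x :: s' then
    first_some (fun col => if admissible c x col
                           then extend_coloring k s' [eta c with x |-> col] else None)
               (iota 1 k)
  else Some c.

Definition packing_search k := extend_coloring k vs (fun=> 0).

Definition packing_chromatic_eqb k :=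
  packing_coloringb k (odflt (fun=> 0) (packing_search k)) &&
  all (fun j => ~~ isSome (packing_search j)) (iota 0 k).

Lemma extend_coloring_complete k c : packing_coloring V e k c ->
  forall s c0, {subset s <= vs} -> (forall y, c0 y != 0 -> c0 y = c y) ->
  isSome (extend_coloring k s c0).
Proof.
case=> rng sep; elim=> [//|x s IH] c0 /= sub_s agree.
have xV : x \in V by rewrite memV sub_s ?mem_head.
have cx_admissible : admissible c0 x (c x).
  apply/allP=> y ys; apply/implyP=> /andP[yx /eqP c0y]; apply/ballP=> d_xy.
  have cxy : c x = c y by rewrite -c0y agree // c0y -lt0n; case/andP: (rng x xV).
  have yV : y \in V by rewrite memV.
  by apply: (sep x y xV yV _ cxy d_xy); rewrite eq_sym.
rewrite first_some_has; apply/hasP; exists (c x).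
  by rewrite mem_iota add1n ltnS; apply: rng.
rewrite cx_admissible IH // => [y ys|y]; first by rewrite sub_s // mem_behead.
by move=> /=; case: ifP => [/eqP -> // | _]; apply: agree.
Qed.

Lemma packing_search_complete k : has_packing V e k -> isSome (packing_search k).
Proof. by case=> c /extend_coloring_complete; apply. Qed.

Lemma packing_chromatic_eqb_sound k :
  packing_chromatic_eqb k -> packing_chromatic_eq V e k.
Proof.
case/andP=> /packing_coloringbP found /allP none; split.
  by exists (odflt (fun=> 0) (packing_search k)).
by move=> j jk /packing_search_complete; apply/negP/none; rewrite mem_iota.
Qed.

End PackingCheck.

Definition vertex_criticalb (T : finType) (e : rel T) (vs : seq T) k :=
  packing_chromatic_eqb e vs k &&
  all (fun x => has (packing_chromatic_eqb e [seq y <- vs | y != x]) (iota 0 k)) vs.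

Lemma vertex_criticalb_sound (T : finType) (e : rel T) (V : {set T}) vs k :
  V =i vs -> vertex_criticalb e vs k -> vertex_critical V e k.
Proof.
move=> memV /andP[crit /allP minus].
split; first exact: packing_chromatic_eqb_sound crit.
move=> x; rewrite memV => /minus /hasP[j]; rewrite mem_iota => jk crit_x.
exists j => //; apply: packing_chromatic_eqb_sound crit_x => y.
by rewrite in_setD1 mem_filter memV.
Qed.

(* [enum 'I_n] does not reduce under [vm_compute]: it matches on opaque proofs. *)
Fixpoint ord_seq n : seq 'I_n :=
  if n is n'.+1 then ord0 :: map (lift ord0) (ord_seq n') else [::].

Lemma mem_ord_seq n (x : 'I_n) : x \in ord_seq n.
Proof.
elim: n x => [|n IH] x; first by case: x.
case: (unliftP ord0 x) => [j ->|->]; rewrite inE ?eqxx //.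
by rewrite (mem_map (@lift_inj _ ord0)) IH orbT.
Qed.

Lemma vertex_critical_ord n (e : rel 'I_n) k :
  vertex_criticalb e (ord_seq n) k -> vertex_critical [set: 'I_n] e k.
Proof. by apply: vertex_criticalb_sound => x; rewrite in_setT mem_ord_seq. Qed.

Theorem mainTheorem3 :
  vertex_critical [set: 'I_4] K4 4 /\
  vertex_critical [set: 'I_5] H1 4 /\
  vertex_critical [set: 'I_5] H2 4 /\
  vertex_critical [set: 'I_6] H3 4 /\
  vertex_critical [set: 'I_7] H4 4 /\
  vertex_critical [set: 'I_6] H5 4 /\
  vertex_critical [set: 'I_6] H6 4 /\
  vertex_critical [set: 'I_10] H7 4 /\
  vertex_critical [set: 'I_10] H8 4 /\
  vertex_critical [set: 'I_8] H9 4.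
Proof.
by repeat match goal with |- _ /\ _ => split end; apply: vertex_critical_ord; vm_compute.
Qed.
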